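(* For every integer $k\geq 6$ and every integer $t$ with $(k-1)(k-2)+1\leq t\leq k(k-1)$, we have $rx_3(K_{2,t})=k$.
   Context: An edge coloring of a graph $G$ is any assignment of colors to the edges (adjacent edges may receive the same color). A tree $T$ in an edge-colored graph is a rainbow tree if no two edges of $T$ have the same color. For $S\subseteq V(G)$, an $S$-tree is a subtree of $G$ containing all vertices of $S$. A $3$-rainbow coloring of $G$ is an edge coloring such that for every set $S$ of $3$ vertices of $G$ there is a rainbow $S$-tree in $G$. The $3$-rainbow index $rx_3(G)$ is the minimum number of colors in a $3$-rainbow coloring of $G$. $K_{2,t}$ denotes the complete bipartite graph with parts of sizes $2$ and $t$. *)

From mathcomp Require Import all_boot.
Set Implicit Arguments. Unset Strict Implicit. Unset Printing Implicit Defensive.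

(* A simple graph is given by a vertex finType V and a symmetric irreflexive
   adjacency relation adj.  Edges are 2-element vertex sets {x,y} with adj x y. *)
Definition is_edge (V : finType) (adj : rel V) (e : {set V}) : Prop :=
  exists x y, adj x y /\ e = [set x; y].

Definition verts (V : finType) (F : {set {set V}}) : {set V} :=
  \bigcup_(e in F) e.

Definition frel_of (V : finType) (F : {set {set V}}) : rel V :=
  fun x y => (x != y) && ([set x; y] \in F).

Definition connectedF (V : finType) (F : {set {set V}}) : Prop :=
  forall x y, x \in verts F -> y \in verts F -> connect (frel_of F) x y.

Definition acyclicF (V : finType) (F : {set {set V}}) : Prop :=
  forall s : seq V, 3 <= size s -> uniq s -> ~~ cycle (frel_of F) s.

Definition is_subtree (V : finType) (adj : rel V) (F : {set {set V}}) : Prop :=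
  (forall e, e \in F -> is_edge adj e) /\ connectedF F /\ acyclicF F.

(* an edge coloring with (at most) k colors: colors from 'I_k
   (values on non-edges are irrelevant) *)
Definition rainbow (V : finType) (k : nat) (c : {set V} -> 'I_k)
  (F : {set {set V}}) : Prop := {in F &, injective c}.

Definition three_rainbow (V : finType) (adj : rel V) (k : nat)
  (c : {set V} -> 'I_k) : Prop :=
  forall S : {set V}, #|S| = 3 ->
    exists F : {set {set V}},
      [/\ is_subtree adj F, S \subset verts F & rainbow c F].

Definition rx3_is (V : finType) (adj : rel V) (k : nat) : Prop :=
  (exists c : {set V} -> 'I_k, three_rainbow adj c) /\
  (forall j, j < k -> forall c : {set V} -> 'I_j, ~ three_rainbow adj c).

Definition K2t_adj (t : nat) : rel ('I_2 + 'I_t)%type :=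
  fun x y => match x, y with
             | inl _, inr _ => true
             | inr _, inl _ => true
             | _, _ => false
             end.

(* Write the vertices of K_{2,t} as the two hubs inl h (h : 'I_2) and the
   leaves inr w (w : 'I_t); every edge is hedge (h, w) = {inl h, inr w}.

   A list s of hub/leaf pairs spans the edge set tree_of s; it is
   a tree as soon as at most one leaf is joined to both hubs and, when both hubs
   are used, some leaf is (tree_of_subtree).  Color edge (h, w) by col h w.  If
   the two colors at each leaf differ, no two leaves carry the same ordered
   pair, and every three colors are avoided by both colors of some leaf, then
   each 3-set of vertices lies in a rainbow tree of this form (span_triples):
   the case of three leaves needs distinct representatives of their color pairs
   (distinct_reps) joined through a leaf whose colors avoid them.  Listing the
   k(k-1) ordered pairs of distinct colors with the (k-1)(k-2) pairs avoiding a
   fixed color first gives such a coloring (rainbow_coloring_exists).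

   In a 3-rainbow coloring, at most two leaves have both their
   edges colored inside a given set of two colors (leaves_in_le2), since a
   rainbow tree reaching three such leaves needs three colors.  Each leaf lies
   in such a class, so counting over 2-sets of j colors gives t <= j(j-1)
   (leaves_le_colors), and j <= 2 colors allow at most two leaves. *)

From mathcomp Require Import all_boot zify.
Set Implicit Arguments. Unset Strict Implicit. Unset Printing Implicit Defensive.

Notation vertex t := ('I_2 + 'I_t)%type.

Lemma I2_cases (h : 'I_2) : h = ord0 \/ h = ord_max.
Proof. by case: h => [[|[|]]] // ?; [left|right]; apply: val_inj. Qed.

Definition hedge t (p : 'I_2 * 'I_t) : {set vertex t} := [set inl p.1; inr p.2].

Lemma hedge_inj t : injective (@hedge t).
Proof.
move=> [h w] [h' w'] E.
have : inl h \in hedge (h', w') by rewrite -E !inE eqxx.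
have : inr w \in hedge (h', w') by rewrite -E !inE eqxx orbT.
by rewrite !inE => /eqP[->] /orP[/eqP[->]|].
Qed.

(* The edge set spanned by a list of hub/leaf pairs, and its adjacency
   relation, which is easier to compute with than frel_of. *)
Definition tree_of t (s : seq ('I_2 * 'I_t)) : {set {set vertex t}} := (@hedge t) @: s.

Definition tree_adj t (s : seq ('I_2 * 'I_t)) : rel (vertex t) :=
  fun x y => match x, y with
             | inl h, inr w | inr w, inl h => (h, w) \in s
             | _, _ => false
             end.

Lemma tree_adj_sym t (s : seq ('I_2 * 'I_t)) : symmetric (tree_adj s).
Proof. by case=> [h|w] [h'|w']. Qed.

Lemma frel_tree_of t (s : seq ('I_2 * 'I_t)) : frel_of (tree_of s) =2 tree_adj s.
Proof.
have hedgeE p : (hedge p \in tree_of s) = (p \in s) by rewrite mem_imset //; apply: hedge_inj.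
move=> x y; rewrite /frel_of; case: x => [h|w]; case: y => [h'|w'] /=.
- apply/negbTE/negP => /andP[_ /imsetP[[h1 w1] _ E]].
  have : inr w1 \in hedge (h1, w1) by rewrite !inE eqxx orbT.
  by rewrite -E !inE.
- exact: (hedgeE (h, w')).
- by rewrite setUC (hedgeE (h', w)).
- apply/negbTE/negP => /andP[_ /imsetP[[h1 w1] _ E]].
  have : inl h1 \in hedge (h1, w1) by rewrite !inE eqxx.
  by rewrite -E !inE.
Qed.

Lemma verts_tree_ofP t (s : seq ('I_2 * 'I_t)) v :
  reflect (exists u, tree_adj s v u) (v \in verts (tree_of s)).
Proof.
apply: (iffP bigcupP) => [[_ /imsetP[[h w] hw ->]]|[u vu]].
  by rewrite !inE => /orP[] /eqP->; [exists (inr w) | exists (inl h)].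
case: v u vu => [h|w] [h'|w'] //= hw.
  by exists (hedge (h, w')); [apply: imset_f | rewrite !inE eqxx].
by exists (hedge (h', w)); [apply: imset_f | rewrite !inE eqxx orbT].
Qed.

Lemma cycle_two_nbrs (T : eqType) (e : rel T) (p : seq T) : symmetric e ->
  3 <= size p -> uniq p -> cycle e p -> forall z, z \in p ->
  exists x y, [/\ x \in p, y \in p, x != y, e z x & e z y].
Proof.
move=> esym p3 up cp z /rot_to [i q def_q].
have mem_q y : y \in z :: q -> y \in p by rewrite -def_q mem_rot.
have : uniq (z :: q) by rewrite -def_q rot_uniq.
have : cycle e (z :: q) by rewrite -def_q rot_cycle.
have : 3 <= size (z :: q) by rewrite -def_q size_rot.
case: q def_q mem_q => [|x [|r q]] //= _ mem_q _.
rewrite rcons_path => /and4P[ezx _ _ elast] /and4P[_ xq _ _].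
exists x, (last r q); split=> //.
- by apply: mem_q; rewrite !inE eqxx orbT.
- exact/mem_q/mem_behead/mem_behead/mem_last.
- by apply: contraNneq xq => ->; rewrite mem_last.
- by rewrite esym.
Qed.

Section TreeOf.
Variables (t : nat) (s : seq ('I_2 * 'I_t)).

(* Leaves joined to both hubs: the only way to close a cycle. *)
Definition both_hubs (w : 'I_t) := ((ord0, w) \in s) && ((ord_max, w) \in s).

(* A cycle alternates hubs and leaves, so it contains a hub whose two cycle
   neighbours are distinct leaves joined to both hubs. *)
Lemma tree_of_acyclic :
  (forall w w', both_hubs w -> both_hubs w' -> w = w') -> acyclicF (tree_of s).
Proof.
move=> both_uniq p p3 up; rewrite (eq_cycle (frel_tree_of s)); apply/negP => cp.
have nbrs := cycle_two_nbrs (@tree_adj_sym t s) p3 up cp.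
have leaf_both w : inr w \in p -> both_hubs w.
  case/nbrs=> x [y [_ _]]; case: x y => [h|//] [h'|//]; rewrite /both_hubs.
  by case: (I2_cases h) => ->; case: (I2_cases h') => -> //= _ -> ->.
have [h hp] : exists h, inl h \in p.
  case: p p3 nbrs {up cp leaf_both} => [|[h|w] p] // _ nbrs; first by exists h; rewrite inE eqxx.
  have [x [_ [xp _ _ wx _]]] := nbrs (inr w) (mem_head _ _).
  by case: x xp wx => [h|//] hp _; exists h.
have [x [y [xp yp]]] := nbrs _ hp.
case: x y xp yp => [//|w] [//|w'] wp w'p.
by rewrite (both_uniq w w') ?leaf_both ?eqxx.
Qed.

(* Every vertex is next to a used hub, and two used hubs are joined
   through a leaf adjacent to both. *)
Lemma tree_of_connected :
  ((exists w, (ord0, w) \in s) -> (exists w, (ord_max, w) \in s) -> exists w, both_hubs w) ->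
  connectedF (tree_of s).
Proof.
move=> join x y; rewrite /connectedF (eq_connect (frel_tree_of s)).
have c_sym := sym_connect_sym (@tree_adj_sym t s).
have to_hub v : v \in verts (tree_of s) ->
    exists2 h, connect (tree_adj s) v (inl h) & exists w, (h, w) \in s.
  case/verts_tree_ofP=> u; case: v u => [h|w] [h'|w'] //= hw.
    by exists h => //; exists w'.
  by exists h'; [apply: connect1 | exists w].
have hubs h h' : (exists w, (h, w) \in s) -> (exists w, (h', w) \in s) ->
    connect (tree_adj s) (inl h) (inl h').
  move=> used used'; case: (eqVneq h h') => [-> //|hh'].
  have [w /andP[w0 w1]] : exists w, both_hubs w.
    by move: used used' hh'; case: (I2_cases h) => ->; case: (I2_cases h') => -> //; auto.
  have c01 : connect (tree_adj s) (inl ord0) (inl ord_max).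
    by apply: (connect_trans (y := inr w)); apply: connect1.
  move: hh'; case: (I2_cases h) => ->; case: (I2_cases h') => -> //= _.
  by rewrite c_sym.
move=> /to_hub[h xh used] /to_hub[h' yh' used'].
by apply: connect_trans xh (connect_trans (hubs _ _ used used') _); rewrite c_sym.
Qed.

Definition tree_shaped :=
  (forall w w', both_hubs w -> both_hubs w' -> w = w') /\
  ((exists w, (ord0, w) \in s) -> (exists w, (ord_max, w) \in s) -> exists w, both_hubs w).

Lemma tree_of_subtree : tree_shaped -> is_subtree (@K2t_adj t) (tree_of s).
Proof.
move=> [both_uniq join]; split; last split.
- by move=> _ /imsetP[[h w] _ ->]; exists (inl h), (inr w).
- exact: tree_of_connected.
- exact: tree_of_acyclic.
Qed.
End TreeOf.

Lemma uniq_map_inj (T1 T2 : eqType) (f : T1 -> T2) (s : seq T1) :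
  uniq (map f s) -> {in s &, injective f}.
Proof.
elim: s => //= a s IH /andP[fa_s us] x y; rewrite !inE.
move=> /predU1P[->|xs] /predU1P[->|ys] //= fxy.
- by move: fa_s; rewrite fxy map_f.
- by move: fa_s; rewrite -fxy map_f.
- exact: IH.
Qed.

Lemma single_hub_shaped t (s : seq ('I_2 * 'I_t)) h :
  {in s, forall p, p.1 = h} -> tree_shaped s.
Proof.
move=> hub_h; suff two_hubs w w' : (ord0, w) \in s -> (ord_max, w') \in s -> False.
  by split=> [w w' /andP[/two_hubs no /no] | [w /two_hubs no] [w' /no]].
by move=> /hub_h /= h0 /hub_h /=; rewrite -h0 => /(congr1 val).
Qed.

Definition spine t (q : seq ('I_2 * 'I_t)) (x : 'I_t) := q ++ [:: (ord0, x); (ord_max, x)].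

Lemma mem_spine t (q : seq ('I_2 * 'I_t)) x h : (h, x) \in spine q x.
Proof. by rewrite mem_cat; case: (I2_cases h) => ->; rewrite !inE eqxx ?orbT. Qed.

Lemma spine_shaped t (q : seq ('I_2 * 'I_t)) x :
  uniq (map snd q) -> x \notin map snd q -> tree_shaped (spine q x).
Proof.
move=> uq xq; split; last by exists x; rewrite /both_hubs !mem_spine.
suff both_x w : both_hubs (spine q x) w -> w = x by move=> w w' /both_x-> /both_x->.
rewrite /both_hubs !mem_cat !inE !xpair_eqE /=.
case: (eqVneq w x) => // _; rewrite !orbF => /andP[w0 w1].
by have := uniq_map_inj uq w0 w1 erefl.
Qed.

Lemma mem_verts_tree_of t (s : seq ('I_2 * 'I_t)) h w : (h, w) \in s ->
  inl h \in verts (tree_of s) /\ inr w \in verts (tree_of s).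
Proof. by move=> hw; split; apply/verts_tree_ofP; [exists (inr w) | exists (inl h)]. Qed.

Lemma I2_other (h h' g : 'I_2) : h != h' -> g = h \/ g = h'.
Proof.
by case: (I2_cases h) (I2_cases h') (I2_cases g) => -> [] -> [] ->; auto.
Qed.

Lemma uniq3 (T : eqType) (a b c : T) : uniq [:: a; b; c] = [&& a != b, a != c & b != c].
Proof. by rewrite /= !inE negb_or andbT andbA. Qed.

Lemma set3_swap12 (T : finType) (a b c : T) : [set a; b; c] = [set b; a; c].
Proof. by apply/setP => v; rewrite !inE (orbC (v == a)). Qed.

Lemma set3_swap23 (T : finType) (a b c : T) : [set a; b; c] = [set a; c; b].
Proof. by apply/setP => v; rewrite !inE orbAC. Qed.

Lemma set3_rot (T : finType) (a b c : T) : [set a; b; c] = [set b; c; a].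
Proof. by rewrite set3_swap12 set3_swap23. Qed.

Section LeafColoring.
Variables (t k : nat) (col : 'I_2 -> 'I_t -> 'I_k).

Definition pcol (p : 'I_2 * 'I_t) : 'I_k := col p.1 p.2.

(* The edge coloring itself; c0 is an arbitrary value on non-edges. *)
Definition edge_color (c0 : 'I_k) (e : {set vertex t}) : 'I_k :=
  if [pick p | e == hedge p] is Some p then pcol p else c0.

Lemma edge_color_hedge c0 p : edge_color c0 (hedge p) = pcol p.
Proof.
rewrite /edge_color; case: pickP => [q /eqP/hedge_inj-> //|none].
by move: (none p); rewrite eqxx.
Qed.

Lemma tree_of_rainbow c0 (s : seq ('I_2 * 'I_t)) :
  uniq (map pcol s) -> rainbow (edge_color c0) (tree_of s).
Proof.
move=> /uniq_map_inj pcol_inj _ _ /imsetP[p ps ->] /imsetP[q qs ->].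
by rewrite !edge_color_hedge => /pcol_inj-> //.
Qed.

Definition rainbow_spanned (S : {set vertex t}) : Prop :=
  exists s, [/\ tree_shaped s, uniq (map pcol s) & S \subset verts (tree_of s)].

Hypothesis col_hubs : forall w, col ord0 w != col ord_max w.
Hypothesis col_inj :
  forall w w', col ord0 w = col ord0 w' -> col ord_max w = col ord_max w' -> w = w'.
Hypothesis col_avoid :
  forall c1 c2 c3 : 'I_k, exists x, forall h, col h x \notin [:: c1; c2; c3].

Lemma col_hubs2 h h' w : h != h' -> col h w != col h' w.
Proof.
by case: (I2_cases h) (I2_cases h') => -> [] -> //= _; rewrite // eq_sym.
Qed.

Lemma col_inj2 h h' w w' : h != h' ->
  col h w = col h w' -> col h' w = col h' w' -> w = w'.
Proof.
by case: (I2_cases h) (I2_cases h') => -> [] -> //= _ e e'; apply: col_inj.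
Qed.

Lemma span_two_hubs h h' w : rainbow_spanned [set inl h; inl h'; inr w].
Proof.
exists (spine [::] w); split.
- exact: spine_shaped.
- by rewrite /= inE andbT; apply: col_hubs.
- apply/subsetP => v; rewrite !inE => /orP[/orP[]|] /eqP->;
    by case: (mem_verts_tree_of (mem_spine [::] w h));
       case: (mem_verts_tree_of (mem_spine [::] w h')).
Qed.

(* A hub h and two leaves: the star at h if its colors differ; otherwise
   the path h - w1 - h' - w2 through the other hub. *)
Lemma span_hub_leaves h w1 w2 : w1 != w2 -> rainbow_spanned [set inl h; inr w1; inr w2].
Proof.
move=> w12; case: (eqVneq (col h w1) (col h w2)) => [same|diff]; last first.
  exists [:: (h, w1); (h, w2)]; split.
  - by apply: (@single_hub_shaped _ _ h) => p; rewrite !inE => /orP[] /eqP->.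
  - by rewrite /= inE diff.
  - have [hv w1v] := mem_verts_tree_of (mem_head (h, w1) [:: (h, w2)]).
    have [_ w2v] := mem_verts_tree_of (mem_last (h, w1) [:: (h, w2)]).
    by apply/subsetP => v; rewrite !inE => /orP[/orP[]|] /eqP->.
have [h' hh'] : exists h', h != h' by case: (I2_cases h) => ->; [exists ord_max | exists ord0].
have fresh g : col h' w2 != col g w1.
  case: (I2_other g hh') => ->.
    by rewrite same eq_sym col_hubs2.
  by apply: contra w12 => /eqP e; apply/eqP/(col_inj2 hh' same).
exists (spine [:: (h', w2)] w1); split.
- by apply: spine_shaped => //=; rewrite inE.
- by rewrite /= !inE !negb_or /pcol /= !fresh col_hubs.
- have [hv w1v] := mem_verts_tree_of (mem_spine [:: (h', w2)] w1 h).
  have [_ w2v] := mem_verts_tree_of (mem_head (h', w2) [:: (ord0, w1); (ord_max, w1)]).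
  by apply/subsetP => v; rewrite !inE => /orP[/orP[]|] /eqP->.
Qed.

Lemma reps_shared_hub0 w1 w2 w3 : w1 != w2 -> col ord0 w1 = col ord0 w2 ->
  exists h1 h2 h3, uniq [:: col h1 w1; col h2 w2; col h3 w3].
Proof.
move=> w12 a12.
have b12 : col ord_max w1 != col ord_max w2 by apply: contra w12 => /eqP b12; apply/eqP/col_inj.
case: (boolP (col ord0 w3 \in [:: col ord_max w1; col ord_max w2])) => a3; last first.
  by exists ord_max, ord_max, ord0; move: a3; rewrite uniq3 b12 !inE negb_or ![_ == col _ w3]eq_sym.
case: (boolP (col ord_max w3 \in [:: col ord_max w1; col ord_max w2])) => b3; last first.
  by exists ord_max, ord_max, ord_max; move: b3; rewrite uniq3 b12 !inE negb_or ![_ == col _ w3]eq_sym.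
have [h3 h3w3] : exists h3, col h3 w3 = col ord_max w1.
  move: a3 b3 (col_hubs w3); rewrite !inE.
  case/orP=> /eqP a3; first by exists ord0.
  by rewrite a3 => /orP[/eqP b3 _|/eqP-> /[!eqxx] //]; exists ord_max.
by exists ord0, ord_max, h3; rewrite uniq3 h3w3 {1}a12 !col_hubs eq_sym b12.
Qed.

Lemma distinct_reps w1 w2 w3 : uniq [:: w1; w2; w3] ->
  exists h1 h2 h3, uniq [:: col h1 w1; col h2 w2; col h3 w3].
Proof.
rewrite uniq3 => /and3P[w12 w13 w23].
have [|a12] := eqVneq (col ord0 w1) (col ord0 w2); first exact: reps_shared_hub0.
have [a13|a13] := eqVneq (col ord0 w1) (col ord0 w3).
  have [h1 [h3 [h2 u]]] := reps_shared_hub0 w2 w13 a13.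
  by exists h1, h2, h3; rewrite -(rot_uniq 1) -rev_uniq.
have [a23|a23] := eqVneq (col ord0 w2) (col ord0 w3).
  have [h2 [h3 [h1 u]]] := reps_shared_hub0 w1 w23 a23.
  by exists h1, h2, h3; rewrite -(rot_uniq 1).
by exists ord0, ord0, ord0; rewrite uniq3 a12 a13 a23.
Qed.

(* Three leaves: an edge of each with distinct colors, joined through the
   two edges of a leaf x whose colors avoid those three. *)
Lemma span_three_leaves w1 w2 w3 :
  uniq [:: w1; w2; w3] -> rainbow_spanned [set inr w1; inr w2; inr w3].
Proof.
move=> uw; have [h1 [h2 [h3 reps]]] := distinct_reps uw.
have [x avoid] := col_avoid (col h1 w1) (col h2 w2) (col h3 w3).
pose q := [:: (h1, w1); (h2, w2); (h3, w3)].
have x_fresh : x \notin map snd q.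
  apply/negP; rewrite /= !inE => /or3P[] /eqP ex;
    [move: (avoid h1) | move: (avoid h2) | move: (avoid h3)];
    by rewrite -ex !inE eqxx ?orbT.
exists (spine q x); split.
- exact: spine_shaped.
- rewrite map_cat cat_uniq reps /pcol /= (negbTE (avoid ord0)) (negbTE (avoid ord_max)).
  by rewrite inE col_hubs.
- apply/subsetP => v; rewrite !inE => /orP[/orP[]|] /eqP->;
    [apply: (proj2 (@mem_verts_tree_of _ _ h1 w1 _))
    |apply: (proj2 (@mem_verts_tree_of _ _ h2 w2 _))
    |apply: (proj2 (@mem_verts_tree_of _ _ h3 w3 _))];
    by rewrite mem_cat !inE eqxx ?orbT.
Qed.

Lemma span_triples (S : {set vertex t}) : #|S| = 3 -> rainbow_spanned S.
Proof.
move=> S3; have /card_gt2P[x [y [z [[xS yS zS] [xy yz zx]]]]] : 2 < #|S| by rewrite S3.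
have -> : S = [set x; y; z].
  apply/esym/eqP; rewrite eqEcard S3; apply/andP; split.
    by apply/subsetP => v; rewrite !inE => /orP[/orP[]|] /eqP->.
  by apply/card_gt2P; exists x, y, z; rewrite !inE !eqxx ?orbT.
case: x y z {xS yS zS} xy yz zx => [h|w] [h'|w'] [h''|w''] //= xy yz zx.
- by case: (I2_other h'' xy) zx yz => ->; rewrite eqxx.
- exact: span_two_hubs.
- by rewrite set3_swap23; apply: span_two_hubs.
- by apply: span_hub_leaves.
- by rewrite set3_rot; apply: span_two_hubs.
- by rewrite set3_swap12; apply: span_hub_leaves; rewrite eq_sym.
- by rewrite -set3_rot; apply: span_hub_leaves.
- by apply: span_three_leaves; rewrite uniq3 xy yz eq_sym zx.
Qed.

Lemma edge_color_three_rainbow c0 : three_rainbow (@K2t_adj t) (edge_color c0).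
Proof.
move=> S /span_triples[s [shaped rainbow_s sub]].
by exists (tree_of s); split; [apply: tree_of_subtree | | apply: tree_of_rainbow].
Qed.
End LeafColoring.

Definition offdiag (T : finType) (A : {set T}) : {set T * T} :=
  [set p | [&& p.1 \in A, p.2 \in A & p.1 != p.2]].

Lemma card_offdiag (T : finType) (A : {set T}) : #|offdiag A| = #|A| * #|A|.-1.
Proof.
pose diag := [set (x, x) | x in A].
have -> : offdiag A = setX A A :\: diag.
  apply/setP => -[x y]; have diagE : ((x, y) \in diag) = (x == y) && (x \in A).
    by apply/imsetP/andP => [[z zA [-> ->]]|[/eqP-> yA]]; [split | exists y].
  by rewrite !inE /= diagE; case: (x == y); case: (x \in A); case: (y \in A).
rewrite cardsD (setIidPr _); last by apply/subsetP => _ /imsetP[x xA ->]; rewrite inE /= xA.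
rewrite cardsX card_imset; last by move=> x y [].
by rewrite -subn1 mulnBr muln1.
Qed.

Lemma two_outside (T : finType) (s : seq T) :
  size s + 2 <= #|T| -> exists a b, [/\ a != b, a \notin s & b \notin s].
Proof.
move=> big; have : 1 < #|~: [set x in s]|.
  rewrite -(leq_add2l #|[set x in s]|) cardsC; apply: leq_trans big.
  by rewrite leq_add2r cardsE card_size.
by case/card_gt1P=> a [b]; rewrite !inE => -[aI bI ab]; exists a, b.
Qed.

(* The color pairs assigned to the leaves: all ordered pairs of distinct
   colors, those avoiding the color z first, so that the first t of them contain
   every pair avoiding z as soon as t exceeds their number. *)
Section LeafPairs.
Variables (T : finType) (z : T) (t : nat).

Let avoid_z := offdiag [set~ z].
Let all_pairs := offdiag [set: T].

Definition pair_list : seq (T * T) := enum avoid_z ++ enum (all_pairs :\: avoid_z).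

Lemma pair_list_uniq : uniq pair_list.
Proof.
rewrite cat_uniq !enum_uniq /= andbT; apply/hasPn => p.
by rewrite !mem_enum inE => /andP[].
Qed.

Lemma mem_pair_list p : (p \in pair_list) = (p.1 != p.2).
Proof.
rewrite mem_cat !mem_enum !inE /=.
by case: (p.1 == z); case: (p.2 == z); case: (p.1 == p.2).
Qed.

Lemma size_pair_list : size pair_list = #|T| * #|T|.-1.
Proof.
rewrite -(card_uniqP pair_list_uniq) -cardsT -card_offdiag.
by apply: eq_card => p; rewrite mem_pair_list !inE.
Qed.

Lemma index_pair_list p : p.1 != z -> p.2 != z -> p.1 != p.2 ->
  index p pair_list < #|T|.-1 * #|T|.-2.
Proof.
move=> p1 p2 p12; have pA : p \in enum avoid_z by rewrite mem_enum !inE p1 p2 p12.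
by rewrite index_cat pA -(cardsC1 z) -card_offdiag cardE index_mem.
Qed.

Definition leaf_pair (w : 'I_t) : T * T := nth (z, z) pair_list w.

Hypothesis t_le : t <= #|T| * #|T|.-1.

Lemma leaf_pair_neq w : (leaf_pair w).1 != (leaf_pair w).2.
Proof. by rewrite -mem_pair_list mem_nth // size_pair_list (leq_trans _ t_le). Qed.

Lemma leaf_pair_inj : injective leaf_pair.
Proof.
move=> w w' /eqP; rewrite nth_uniq ?pair_list_uniq ?size_pair_list ?(leq_trans _ t_le) //.
by move=> /eqP/val_inj.
Qed.

Hypothesis t_gt : #|T|.-1 * #|T|.-2 < t.

Lemma leaf_pair_onto p : p.1 != z -> p.2 != z -> p.1 != p.2 ->
  exists w : 'I_t, leaf_pair w = p.
Proof.
move=> p1 p2 p12; have ip := index_pair_list p1 p2 p12.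
exists (Ordinal (leq_trans ip (ltnW t_gt))); rewrite /leaf_pair /= nth_index //.
by rewrite mem_pair_list.
Qed.
End LeafPairs.

Definition pair_col (T : Type) (h : 'I_2) (p : T * T) : T := if h == ord0 then p.1 else p.2.

Lemma rainbow_coloring_exists k t : 6 <= k -> (k - 1) * (k - 2) < t <= k * (k - 1) ->
  exists c : {set vertex t} -> 'I_k, three_rainbow (@K2t_adj t) c.
Proof.
move=> k6 /andP[t_gt t_le].
have {}t_le : t <= #|'I_k| * #|'I_k|.-1 by rewrite card_ord -subn1.
have {}t_gt : #|'I_k|.-1 * #|'I_k|.-2 < t.
  by rewrite card_ord -!subn1 -subnDA.
have z : 'I_k := Ordinal (leq_trans (isT : 0 < 6) k6).
pose col h (w : 'I_t) := pair_col h (leaf_pair z w).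
exists (edge_color col z); apply: edge_color_three_rainbow.
- by move=> w; apply: leaf_pair_neq.
- move=> w w'; rewrite /col /pair_col /= => e1 e2; apply: (@leaf_pair_inj _ z _ t_le).
  exact: injective_projections.
- move=> c1 c2 c3.
  have [|a [b [ab az_c bz_c]]] := two_outside (s := [:: z; c1; c2; c3]); first by rewrite card_ord.
  have az : a != z by apply: contraNneq az_c => ->; apply: mem_head.
  have bz : b != z by apply: contraNneq bz_c => ->; apply: mem_head.
  have [w ew] := leaf_pair_onto t_gt (p := (a, b)) az bz ab.
  exists w => h; rewrite /col ew /pair_col /=.
  by case: (h == ord0); [apply: contra az_c | apply: contra bz_c] => ac; rewrite in_cons ac orbT.
Qed.

Lemma card3 (T : finType) (x y z : T) :
  x != y -> x != z -> y != z -> #|[set x; y; z]| = 3.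
Proof. by move=> xy xz yz; rewrite -setUA cardsU1 cards2 yz !inE negb_or xy xz. Qed.

Lemma leaf_edge t (F : {set {set vertex t}}) w :
  (forall e, e \in F -> is_edge (@K2t_adj t) e) -> inr w \in verts F ->
  exists h, hedge (h, w) \in F.
Proof.
move=> edges /bigcupP[e eF we]; have [x [y [xy def_e]]] := edges e eF.
move: we; rewrite def_e in eF * => /set2P[] wE; subst.
  by case: y xy eF => [h|//] _ eF; exists h; rewrite /hedge setUC.
by case: x xy eF => [h|//] _ eF; exists h.
Qed.

Section LowerBound.
Variables (t j : nat) (c : {set vertex t} -> 'I_j).
Hypothesis c_rainbow : three_rainbow (@K2t_adj t) c.

Definition leaves_in (C : {set 'I_j}) : {set 'I_t} :=
  [set w | [forall h, c (hedge (h, w)) \in C]].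

(* A rainbow tree through three such leaves would show three colors in C. *)
Lemma leaves_in_le2 (C : {set 'I_j}) : #|C| <= 2 -> #|leaves_in C| <= 2.
Proof.
move=> C2; rewrite leqNgt; apply/negP => /card_gt2P[x [y [w [[xC yC wC] [xy yw wx]]]]].
have xw : inr x != inr w :> vertex t by rewrite eq_sym.
have [F [[edges _] sub rbF]] := c_rainbow (card3 (xy : inr x != inr y :> vertex t) xw yw).
have edge_at v : v \in leaves_in C -> (inr v : vertex t) \in [set inr x; inr y; inr w] ->
    exists2 h, hedge (h, v) \in F & c (hedge (h, v)) \in C.
  rewrite inE => /forallP vC vS; have [h hF] := leaf_edge edges (subsetP sub _ vS).
  by exists h.
have col_neq v v' h h' : v != v' -> hedge (h, v) \in F -> hedge (h', v') \in F ->
    c (hedge (h, v)) != c (hedge (h', v')).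
  by move=> vv' eF e'F; apply: contra vv' => /eqP/(rbF _ _ eF e'F)/hedge_inj[_ ->].
have [|hx xF xC'] := edge_at x xC; first by rewrite !inE eqxx.
have [|hy yF yC'] := edge_at y yC; first by rewrite !inE eqxx orbT.
have [|hw wF wC'] := edge_at w wC; first by rewrite !inE eqxx orbT.
have : 2 < #|C|.
  apply/card_gt2P; exists (c (hedge (hx, x))), (c (hedge (hy, y))), (c (hedge (hw, w))).
  by split; split; rewrite ?col_neq // eq_sym col_neq.
by rewrite ltnNge C2.
Qed.
(* Double counting of leaves over the 2-sets of colors. *)
Lemma leaves_le_colors : 1 < j -> t <= j * j.-1.
Proof.
move=> j2; pose pairs := [set C : {set 'I_j} | #|C| == 2].
have cover w : exists2 C, C \in pairs & w \in leaves_in C.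
  pose a := c (hedge (ord0, w)); pose b := c (hedge (ord_max, w)).
  have [b' ab'] : exists b' : 'I_j, a != b'.
    have /card_gt1P[x [y [_ _ xy]]] : 1 < #|'I_j| by rewrite card_ord.
    by case: (eqVneq a x) => [->|]; [exists y | exists x].
  exists (if a == b then [set a; b'] else [set a; b]).
    by rewrite inE; case: (eqVneq a b) => [_|ab]; rewrite cards2 ?ab' ?ab.
  rewrite inE; apply/forallP => h; case: (I2_cases h) => ->;
    by case: (eqVneq a b) => [ab|_]; rewrite !inE -/a -/b ?ab eqxx ?orbT.
have count_leaves : t <= \sum_(C in pairs) #|leaves_in C|.
  apply: (@leq_trans (\sum_(w : 'I_t) 1)); first by rewrite sum1_card card_ord.
  apply: (@leq_trans (\sum_w \sum_(C in pairs) (w \in leaves_in C))).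
    by apply: leq_sum => w _; have [C pC wC] := cover w; rewrite (bigD1 C) //= wC.
  rewrite exchange_big; apply: leq_sum => C _.
  rewrite -sum1_card [X in _ <= X]big_mkcond.
  by apply: leq_sum => w _; case: (w \in _).
apply: (leq_trans count_leaves); apply: (@leq_trans (\sum_(C in pairs) 2)).
  by apply: leq_sum => C; rewrite inE => /eqP C2; apply: leaves_in_le2; rewrite C2.
by rewrite sum_nat_const card_draws card_ord mulnC -mul_bin_diag bin1.
Qed.

Lemma leaves_le_two : j <= 2 -> t <= 2.
Proof.
move=> j2; have <- : #|leaves_in setT| = t.
  rewrite -[RHS]card_ord; apply: eq_card => w; rewrite !inE.
  by apply/forallP => h; rewrite inE.
by apply: leaves_in_le2; rewrite cardsT card_ord.
Qed.
End LowerBound.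

Theorem lemma6 (k t : nat) :
  6 <= k -> (k - 1) * (k - 2) + 1 <= t <= k * (k - 1) ->
  rx3_is (@K2t_adj t) k.
Proof.
move=> k6 /andP[t_gt t_le]; split.
  by apply: rainbow_coloring_exists; rewrite // -addn1 t_gt t_le.
move=> j jk c c_rainbow.
have [j_small|j2] := leqP j 2.
  by have := leaves_le_two c_rainbow j_small; lia.
have := leaves_le_colors c_rainbow (ltnW j2).
have : j * j.-1 <= (k - 1) * (k - 2) by apply: leq_mul; lia.
lia.
Qed.
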